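(* Let $(V,v)$ be a pair of continuous upper and lower probabilities on $(\Omega,\mathcal{F})$ and let $\mathcal{F}_0$ be a sub-$\sigma$-algebra of $\mathcal{F}$ with $v(A)\in\{0,1\}$ for all $A\in\mathcal{F}_0$. Then for every $\mathcal{F}_0$-measurable real-valued random variable $\xi$, $$v\Big(\Big\{\int_{\Omega}\xi\, dv \le\xi\le\int_{\Omega}\xi\, dV\Big\}\Big)=1,\quad V\Big(\Big\{\xi=\int_{\Omega}\xi\, dv\Big\}\Big)=1,\quad V\Big(\Big\{\xi=\int_{\Omega}\xi\, dV\Big\}\Big)=1.$$
   Context: For a nonempty set $\mathcal{P}$ of finitely additive probabilities on $\mathcal{F}$, $V(A)=\sup_{P\in\mathcal{P}}P(A)$ and $v(A)=\inf_{P\in\mathcal{P}}P(A)$ are the upper and lower probabilities; they are continuous if $V(A_n)\to V(A)$ and $v(A_n)\to v(A)$ whenever $A_n\uparrow A$ or $A_n\downarrow A$. Choquet integral: $\int_{\Omega}\xi\, d\mu=\int_{0}^{\infty}\mu(\{\xi\ge t\})\,dt+\int_{-\infty}^0[\mu(\{\xi\ge t\})-1]\,dt$. *)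

From HB Require Import structures.
From mathcomp Require Import all_boot all_order all_algebra.
From mathcomp Require Import all_classical all_reals all_analysis.
Set Implicit Arguments. Unset Strict Implicit. Unset Printing Implicit Defensive.
Import Order.TTheory GRing.Theory Num.Theory numFieldNormedType.Exports.
Local Open Scope classical_set_scope.
Local Open Scope ring_scope.

Section Defs.
Context {d : measure_display} {T : measurableType d} {R : realType}.

(* A finitely additive probability on the sigma-algebra F = measurable of T
   (its values outside F are irrelevant). *)
Definition fa_probability (P : set T -> R) : Prop :=
  [/\ P setT = 1,
      (forall A, measurable A -> 0 <= P A) &
      (forall A B, measurable A -> measurable B -> A `&` B = set0 ->
         P (A `|` B) = P A + P B)].

Definition upper_prob (PP : set (set T -> R)) (A : set T) : R :=
  sup [set P A | P in PP].
Definition lower_prob (PP : set (set T -> R)) (A : set T) : R :=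
  inf [set P A | P in PP].

Definition continuous_setfun (mu : set T -> R) : Prop :=
  (forall A : (set T)^nat, (forall n, measurable (A n)) ->
     (forall n, A n `<=` A n.+1) ->
     (fun n => mu (A n)) @ \oo --> mu (\bigcup_n A n)) /\
  (forall A : (set T)^nat, (forall n, measurable (A n)) ->
     (forall n, A n.+1 `<=` A n) ->
     (fun n => mu (A n)) @ \oo --> mu (\bigcap_n A n)).

Definition choquet (mu : set T -> R) (xi : T -> R) : \bar R :=
  adde
   (\int[lebesgue_measure]_(t in `[(0:R), +oo[%classic)
      ((mu [set w | t <= xi w])%:E))
   (\int[lebesgue_measure]_(t in `]-oo, (0:R)[%classic)
      ((mu [set w | t <= xi w] - 1)%:E)).

End Defs.

(* Since v is {0,1}-valued on the events of xi and V A = 1 - v (~` A), so is V.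
   For mu = v or V, t |-> mu {xi >= t} is then {0,1}-valued, nonincreasing,
   left-continuous, equal to 1 far to the left and to 0 far to the right (all by
   continuity along monotone sequences of events), hence the indicator of a ray
   ]-oo, a]; its Choquet integral is a, and continuity from below gives
   mu {xi > a} = 0.  Let a and b be these points for v and V.  Every P of the
   family gives mass 1 to {xi >= a} and mass 0 to {xi > b}, which is the first
   identity; V {xi = a} = 0 would make P {xi > a} = 1 for all P, against
   v {xi > a} = 0; V {xi = b} = 0 would make V {xi >= b} = 0. *)

From HB Require Import structures.
From mathcomp Require Import all_boot all_order all_algebra.
From mathcomp Require Import all_classical all_reals all_analysis.
From mathcomp Require Import lra.
Import Order.TTheory GRing.Theory Num.Theory numFieldNormedType.Exports.
Local Open Scope classical_set_scope.
Local Open Scope ring_scope.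
Set Implicit Arguments. Unset Strict Implicit. Unset Printing Implicit Defensive.

Section ChoquetStep.
Context {R : realType}.

Lemma integral_step_itvcy (c : R) :
  (\int[lebesgue_measure]_(t in `[0%R, +oo[%classic)
     ((if t <= c then 1 else 0)%R)%:E)%E = (Num.max c 0)%:E.
Proof.
transitivity (\int[lebesgue_measure]_(t in `[0%R, +oo[%classic) (\1_`[0%R, c] t)%:E)%E.
  apply: eq_integral => t; rewrite inE /= in_itv /= andbT => t0.
  by rewrite indicE mem_setE in_itv /= t0; case: (t <= c).
rewrite (@integral_indic _ _ _ lebesgue_measure _ (measurable_itv _) _ (measurable_itv _)).
rewrite setIidl; last by move=> t; rewrite /= !in_itv /= => /andP[->].
have /= -> := @lebesgue_measure_itv R `[0, c].
by rewrite lte_fin oppr0 adde0; case: ltP.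
Qed.

Lemma integral_step_itvNyo (c : R) :
  (\int[lebesgue_measure]_(t in `]-oo, 0%R[%classic)
     ((if t <= c then 1 else 0) - 1)%R%:E)%E = (Num.min c 0)%:E.
Proof.
transitivity (\int[lebesgue_measure]_(t in `]-oo, 0%R[%classic) - (\1_`]c, 0%R[ t)%:E)%E.
  apply: eq_integral => t; rewrite inE /= in_itv /= => t0.
  rewrite indicE mem_setE in_itv /= t0 andbT ltNge.
  by case: (t <= c); rewrite /= ?subrr ?sub0r ?oppr0.
rewrite (@integral_ge0N _ _ _ lebesgue_measure _ (fun t => (\1_`]c, 0%R[ t)%:E));
  last by move=> t _; rewrite lee_fin.
rewrite (@integral_indic _ _ _ lebesgue_measure _ (measurable_itv _) _ (measurable_itv _)).
rewrite setIidl; last by move=> t; rewrite /= !in_itv /= => /andP[_ ->].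
have /= -> := @lebesgue_measure_itv R `]c, 0[.
by rewrite lte_fin add0e; case: ltP; rewrite ?oppe0 // EFinN oppeK.
Qed.

End ChoquetStep.

Lemma choquet_step (d : measure_display) (T : measurableType d) (R : realType)
    (mu : set T -> R) (xi : T -> R) (c : R) :
  (forall t, mu [set w | t <= xi w] = if t <= c then 1 else 0) ->
  choquet mu xi = c%:E.
Proof.
move=> mu_step; rewrite /choquet.
under eq_integral do rewrite mu_step.
under [X in adde _ X]eq_integral do rewrite mu_step.
by rewrite integral_step_itvcy integral_step_itvNyo -[c in RHS]addr0 -(addr_max_min c 0).
Qed.

Lemma down_closed_ray (R : realType) (Q : set R) :
  (forall s t, t <= s -> Q s -> Q t) -> Q !=set0 -> ~` Q !=set0 ->
  (forall a, (forall n, Q (a - n.+1%:R^-1)) -> Q a) ->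
  exists a, forall t, Q t <-> t <= a.
Proof.
move=> Q_down Q_neq0 [b nQb] Q_closed.
have Q_ub : ubound Q b.
  by move=> t Qt; rewrite leNgt; apply/negP => /ltW bt; exact/nQb/(Q_down t).
have Q_sup : Q (sup Q).
  apply: Q_closed => n; have [|t Qt ltt] := sup_gt Q_neq0 (_ : sup Q - n.+1%:R^-1 < sup Q).
    by rewrite gtrBl invr_gt0 ltr0Sn.
  exact: Q_down (ltW ltt) Qt.
exists (sup Q) => t; split => [Qt|/Q_down]; last exact.
by apply: ub_le_sup => //; exists b.
Qed.

Section PreimageRays.
Context {T : Type} {R : realType}.
Variable xi : T -> R.

Lemma bigcup_xi_ge_Nnat : \bigcup_n [set w | - n%:R <= xi w] = setT.
Proof.
apply/seteqP; split => // w _; exists (Num.bound `|xi w|) => //=.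
rewrite lerNl; apply/ltW/(le_lt_trans _ (archi_boundP (normr_ge0 _))).
by rewrite -normrN ler_norm.
Qed.

Lemma bigcap_xi_ge_nat : \bigcap_n [set w | n%:R <= xi w] = set0.
Proof.
apply/seteqP; split => // w /(_ (Num.bound `|xi w|) I) /=.
by apply/negP; rewrite -ltNge (le_lt_trans (ler_norm _)) // archi_boundP.
Qed.

Lemma bigcap_xi_ge_subVnat a :
  \bigcap_n [set w | a - n.+1%:R^-1 <= xi w] = [set w | a <= xi w].
Proof.
apply/seteqP; split => w /= leaxi; last first.
  by move=> n _ /=; apply: le_trans leaxi; rewrite gerBl invr_ge0.
rewrite leNgt; apply/negP => /ltr_add_invr[n].
by rewrite -ltrBrDr => /lt_le_trans/(_ (leaxi n I)); rewrite ltxx.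
Qed.

Lemma bigcup_xi_ge_addVnat a :
  \bigcup_n [set w | a + n.+1%:R^-1 <= xi w] = [set w | a < xi w].
Proof.
apply/seteqP; split => w /=.
  by move=> [n _ /=]; apply: lt_le_trans; rewrite ltrDl invr_gt0.
by move=> /ltr_add_invr[n /ltW]; exists n.
Qed.

End PreimageRays.

Section FAProbability.
Context {d : measure_display} {T : measurableType d} {R : realType}.
Variable P : set T -> R.
Hypothesis P_fa : fa_probability P.

Lemma fa_probU A B : measurable A -> measurable B -> A `&` B = set0 ->
  P (A `|` B) = P A + P B.
Proof. by case: P_fa => _ _; apply. Qed.

Lemma fa_prob_ge0 A : measurable A -> 0 <= P A.
Proof. by case: P_fa => _ + _; apply. Qed.

Lemma fa_probT : P setT = 1.
Proof. by case: P_fa. Qed.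

Lemma fa_prob0 : P set0 = 0.
Proof. by have := fa_probU measurable0 measurable0 (setI0 _); rewrite setU0; lra. Qed.

Lemma fa_probC A : measurable A -> P (~` A) = 1 - P A.
Proof.
move=> mA; have := fa_probU mA (measurableC mA) (setICr A).
by rewrite setUCr fa_probT; lra.
Qed.

Lemma fa_prob_le1 A : measurable A -> P A <= 1.
Proof.
by move=> mA; have := fa_prob_ge0 (measurableC mA); rewrite fa_probC // subr_ge0.
Qed.

Lemma le_fa_prob A B : measurable A -> measurable B -> A `<=` B -> P A <= P B.
Proof.
move=> mA mB AB; rewrite -(setDUK AB) fa_probU ?setDIK //; last exact: measurableD.
by rewrite lerDl fa_prob_ge0 //; exact: measurableD.
Qed.

Lemma fa_probD_eq1 A B : measurable A -> measurable B ->
  P A = 1 -> P B = 0 -> P (A `\` B) = 1.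
Proof.
move=> mA mB PA1 PB0; have mAB := measurableI _ _ mA mB.
have := fa_probU mAB (measurableD mA mB).
rewrite -setIA setDIK setI0 setUIDK PA1 => /(_ erefl).
have := le_fa_prob mAB mB (@subIsetr _ _ _).
by have := fa_prob_ge0 mAB; rewrite PB0; lra.
Qed.

End FAProbability.

Section LowerUpperProbability.
Context {d : measure_display} {T : measurableType d} {R : realType}.
Variable PP : set (set T -> R).
Hypothesis PP_neq0 : PP !=set0.
Hypothesis PP_fa : forall P, PP P -> fa_probability P.

Local Notation v := (lower_prob PP).
Local Notation V := (upper_prob PP).

Let values_neq0 A : [set P A | P in PP] !=set0.
Proof. by case: PP_neq0 => P PP_P; exists (P A), P. Qed.

Lemma lower_prob_le P A : PP P -> measurable A -> v A <= P A.
Proof.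
move=> PP_P mA; apply: ge_inf; last by exists P.
by exists 0 => _ [Q /PP_fa PQ <-]; exact: fa_prob_ge0.
Qed.

Lemma upper_prob_ge P A : PP P -> measurable A -> P A <= V A.
Proof.
move=> PP_P mA; apply: ub_le_sup; last by exists P.
by exists 1 => _ [Q /PP_fa PQ <-]; exact: fa_prob_le1.
Qed.

Lemma lower_prob_ge0 A : measurable A -> 0 <= v A.
Proof. by move=> mA; apply: lb_le_inf => // _ [P /PP_fa PP_P <-]; exact: fa_prob_ge0. Qed.

Lemma lower_prob_eq1 A : measurable A -> v A = 1 <-> forall P, PP P -> P A = 1.
Proof.
move=> mA; split => [vA1 P PP_P|PA1].
  have := fa_prob_le1 (PP_fa PP_P) mA.
  by have := lower_prob_le PP_P mA; rewrite vA1; lra.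
have [P PP_P] := PP_neq0; apply/eqP; rewrite eq_le -{1}(PA1 P PP_P) lower_prob_le //=.
by apply: lb_le_inf => // _ [Q PP_Q <-]; rewrite PA1.
Qed.

Lemma upper_prob_eq0 A : measurable A -> V A = 0 <-> forall P, PP P -> P A = 0.
Proof.
move=> mA; split => [VA0 P PP_P|PA0].
  have := fa_prob_ge0 (PP_fa PP_P) mA.
  by have := upper_prob_ge PP_P mA; rewrite VA0; lra.
have [P PP_P] := PP_neq0; apply/eqP; rewrite eq_le -{2}(PA0 P PP_P) upper_prob_ge // andbT.
by apply: ge_sup => // _ [Q PP_Q <-]; rewrite PA0.
Qed.

Lemma upper_probE A : measurable A -> V A = 1 - v (~` A).
Proof.
move=> mA; apply/eqP; rewrite eq_le; apply/andP; split.
  apply: ge_sup => // _ [P PP_P <-].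
  by have := lower_prob_le PP_P (measurableC mA); rewrite (fa_probC (PP_fa PP_P) mA); lra.
suff : 1 - V A <= v (~` A) by lra.
apply: lb_le_inf => // _ [P PP_P <-].
by have := upper_prob_ge PP_P mA; rewrite (fa_probC (PP_fa PP_P) mA); lra.
Qed.

Lemma le_lower_prob A B : measurable A -> measurable B -> A `<=` B -> v A <= v B.
Proof.
move=> mA mB AB; apply: lb_le_inf => // _ [P PP_P <-].
exact: le_trans (lower_prob_le PP_P mA) (le_fa_prob (PP_fa PP_P) mA mB AB).
Qed.

Lemma le_upper_prob A B : measurable A -> measurable B -> A `<=` B -> V A <= V B.
Proof.
move=> mA mB AB; apply: ge_sup => // _ [P PP_P <-].
exact: le_trans (le_fa_prob (PP_fa PP_P) mA mB AB) (upper_prob_ge PP_P mB).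
Qed.

Lemma lower_prob0 : v set0 = 0.
Proof.
have [P PP_P] := PP_neq0; apply/eqP; rewrite eq_le lower_prob_ge0 // andbT.
by rewrite -(fa_prob0 (PP_fa PP_P)) lower_prob_le.
Qed.

Lemma lower_probT : v setT = 1.
Proof. by apply/lower_prob_eq1 => // P /PP_fa/fa_probT. Qed.

Lemma upper_prob0 : V set0 = 0.
Proof. by apply/upper_prob_eq0 => // P /PP_fa/fa_prob0. Qed.

Lemma upper_probT : V setT = 1.
Proof. by rewrite upper_probE // setCT lower_prob0 subr0. Qed.

End LowerUpperProbability.

Section ZeroOneChoquet.
Context {d : measure_display} {T : measurableType d} {R : realType}.
Variables (mu : set T -> R) (xi : T -> R).
Hypothesis le_mu : forall A B, measurable A -> measurable B -> A `<=` B -> mu A <= mu B.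
Hypothesis mu_cont : continuous_setfun mu.
Hypothesis mu0 : mu set0 = 0.
Hypothesis muT : mu setT = 1.
Hypothesis measurable_xi_ge : forall t, measurable [set w | t <= xi w].
Hypothesis mu_xi_ge01 : forall t,
  mu [set w | t <= xi w] = 0 \/ mu [set w | t <= xi w] = 1.

Let mu_bigcup_cst (A : (set T)^nat) c : (forall n, measurable (A n)) ->
  (forall n, A n `<=` A n.+1) -> (forall n, mu (A n) = c) -> mu (\bigcup_n A n) = c.
Proof.
move=> mA A_incr muA; have := mu_cont.1 A mA A_incr.
rewrite (_ : (fun n => mu (A n)) = fun=> c); last exact: funext.
by move=> mu_lim; exact: cvg_unique _ mu_lim (cvg_cst c).
Qed.

Let mu_bigcap_cst (A : (set T)^nat) c : (forall n, measurable (A n)) ->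
  (forall n, A n.+1 `<=` A n) -> (forall n, mu (A n) = c) -> mu (\bigcap_n A n) = c.
Proof.
move=> mA A_decr muA; have := mu_cont.2 A mA A_decr.
rewrite (_ : (fun n => mu (A n)) = fun=> c); last exact: funext.
by move=> mu_lim; exact: cvg_unique _ mu_lim (cvg_cst c).
Qed.

Let xi_ge_neq1 t : mu [set w | t <= xi w] <> 1 -> mu [set w | t <= xi w] = 0.
Proof. by case: (mu_xi_ge01 t). Qed.

Lemma mu_xi_ge_ray : exists a, forall t, mu [set w | t <= xi w] = 1 <-> t <= a.
Proof.
apply: (@down_closed_ray _ (fun t => mu [set w | t <= xi w] = 1)).
- move=> s t ts mus1; case: (mu_xi_ge01 t) => // mut0.
  have := le_mu (measurable_xi_ge s) (measurable_xi_ge t) (fun w => le_trans ts).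
  by rewrite mus1 mut0 ler10.
- apply: contrapT => no_t1.
  suff : mu setT = 0 by rewrite muT => /eqP; rewrite oner_eq0.
  rewrite -(bigcup_xi_ge_Nnat xi); apply: mu_bigcup_cst => [n|n w /=|n].
  + exact: measurable_xi_ge.
  + by apply: le_trans; rewrite lerN2 ler_nat.
  + by apply: xi_ge_neq1 => mu1; apply: no_t1; exists (- n%:R).
- apply: contrapT => all_t1.
  suff : mu set0 = 1 by rewrite mu0 => /eqP; rewrite eq_sym oner_eq0.
  rewrite -(bigcap_xi_ge_nat xi); apply: mu_bigcap_cst => [n|n w /=|n].
  + exact: measurable_xi_ge.
  + by apply: le_trans; rewrite ler_nat.
  + by apply: contrapT => mun1; apply: all_t1; exists n%:R.
- move=> a mu1; rewrite -(bigcap_xi_ge_subVnat xi).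
  apply: mu_bigcap_cst => [n|n w /=|n]; [exact: measurable_xi_ge| |exact: mu1].
  by apply: le_trans; rewrite lerD2l lerN2 lef_pV2 ?posrE ?ler_nat.
Qed.

Lemma zero_one_choquet : exists a,
  [/\ choquet mu xi = a%:E, mu [set w | a <= xi w] = 1 & mu [set w | a < xi w] = 0].
Proof.
have [a mu_xi_ge1] := mu_xi_ge_ray.
have mu_xi_geE t : mu [set w | t <= xi w] = if t <= a then 1 else 0.
  by case: ifPn => [/mu_xi_ge1//|/negP ta]; apply: xi_ge_neq1 => /mu_xi_ge1.
exists a; split; first exact: choquet_step.
  by rewrite mu_xi_geE lexx.
rewrite -(bigcup_xi_ge_addVnat xi); apply: mu_bigcup_cst => [n|n w /=|n].
- exact: measurable_xi_ge.
- by apply: le_trans; rewrite lerD2l lef_pV2 ?posrE ?ler_nat.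
- by rewrite mu_xi_geE ifN // -ltNge ltrDl invr_gt0.
Qed.

End ZeroOneChoquet.

Section ZeroOneLaw.
Context {d : measure_display} {T : measurableType d} {R : realType}.
Variables (PP : set (set T -> R)) (xi : T -> R).
Hypothesis PP_neq0 : PP !=set0.
Hypothesis PP_fa : forall P, PP P -> fa_probability P.
Hypothesis measurable_xi : forall B, measurable B -> measurable (xi @^-1` B).
Hypothesis lower_prob_xi01 : forall B, measurable B ->
  lower_prob PP (xi @^-1` B) = 0 \/ lower_prob PP (xi @^-1` B) = 1.

Local Notation v := (lower_prob PP).
Local Notation V := (upper_prob PP).

Lemma upper_prob_xi01 B : measurable B -> V (xi @^-1` B) = 0 \/ V (xi @^-1` B) = 1.
Proof.
move=> mB; rewrite (upper_probE PP_neq0 PP_fa (measurable_xi mB)) preimage_setC.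
by case: (lower_prob_xi01 (measurableC mB)) => ->; [right; rewrite subr0|left; rewrite subrr].
Qed.

Let xi_geE t : [set w | t <= xi w] = xi @^-1` `[t, +oo[.
Proof. by apply/seteqP; split => w /=; rewrite in_itv /= andbT. Qed.

Let measurable_xi_ge t : measurable [set w | t <= xi w].
Proof. by rewrite xi_geE; apply: measurable_xi; exact: measurable_itv. Qed.

Let measurable_xi_gt t : measurable [set w | t < xi w].
Proof.
rewrite (_ : [set w | t < xi w] = xi @^-1` `]t, +oo[).
  by apply: measurable_xi; exact: measurable_itv.
by apply/seteqP; split => w /=; rewrite in_itv /= andbT.
Qed.

Let measurable_xi_eq t : measurable [set w | xi w = t].
Proof. exact: measurable_xi (measurable_set1 t). Qed.

Let fa_prob_xi_ge P c : PP P ->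
  P [set w | c <= xi w] = P [set w | xi w = c] + P [set w | c < xi w].
Proof.
move=> PP_P; rewrite -(fa_probU (PP_fa PP_P)) //; last first.
  by apply/seteqP; split => // w [/= ->]; rewrite ltxx.
congr P; apply/seteqP; split => w /=; last by case=> [->|/ltW].
by rewrite le_eqVlt => /orP[/eqP->|]; [left|right].
Qed.

Hypothesis lower_prob_cont : continuous_setfun v.
Hypothesis upper_prob_cont : continuous_setfun V.

Lemma lower_choquet_xi : exists a, [/\ choquet v xi = a%:E,
  forall P, PP P -> P [set w | a <= xi w] = 1 & v [set w | a < xi w] = 0].
Proof.
have [|a [-> va1 va0]] := zero_one_choquet (le_lower_prob PP_neq0 PP_fa) lower_prob_cont
  (lower_prob0 PP_neq0 PP_fa) (lower_probT PP_neq0 PP_fa) measurable_xi_ge.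
  by move=> t; rewrite xi_geE; apply: lower_prob_xi01; exact: measurable_itv.
by exists a; split => //; exact/(lower_prob_eq1 PP_neq0 PP_fa (measurable_xi_ge a)).
Qed.

Lemma upper_choquet_xi : exists b, [/\ choquet V xi = b%:E,
  V [set w | b <= xi w] = 1 & forall P, PP P -> P [set w | b < xi w] = 0].
Proof.
have [|b [-> Vb1 Vb0]] := zero_one_choquet (le_upper_prob PP_neq0 PP_fa) upper_prob_cont
  (upper_prob0 PP_neq0 PP_fa) (upper_probT PP_neq0 PP_fa) measurable_xi_ge.
  by move=> t; rewrite xi_geE; apply: upper_prob_xi01; exact: measurable_itv.
by exists b; split => //; exact/(upper_prob_eq0 PP_neq0 PP_fa (measurable_xi_gt b)).
Qed.

Lemma lower_prob_xi_itv a b :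
  (forall P, PP P -> P [set w | a <= xi w] = 1) ->
  (forall P, PP P -> P [set w | b < xi w] = 0) ->
  v [set w | a <= xi w <= b] = 1.
Proof.
move=> Pa1 Pb0.
have -> : [set w | a <= xi w <= b] = [set w | a <= xi w] `\` [set w | b < xi w].
  apply/seteqP; split => w /=.
    by case/andP => -> wb; split => //; apply/negP; rewrite -leNgt.
  by case=> -> /negP; rewrite -leNgt.
have mD := measurableD (measurable_xi_ge a) (measurable_xi_gt b).
apply/(lower_prob_eq1 PP_neq0 PP_fa mD) => P PP_P.
by apply: (fa_probD_eq1 (PP_fa PP_P)) => //; [exact: Pa1|exact: Pb0].
Qed.

Lemma upper_prob_xi_eq_lower a :
  (forall P, PP P -> P [set w | a <= xi w] = 1) -> v [set w | a < xi w] = 0 ->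
  V [set w | xi w = a] = 1.
Proof.
move=> Pa1 va0; case: (upper_prob_xi01 (measurable_set1 a)) => //.
move=> /(upper_prob_eq0 PP_neq0 PP_fa (measurable_xi_eq a)) Pa0.
have : v [set w | a < xi w] = 1.
  apply/(lower_prob_eq1 PP_neq0 PP_fa (measurable_xi_gt a)) => P PP_P.
  by have := fa_prob_xi_ge a PP_P; rewrite Pa1 // Pa0 // add0r.
by rewrite va0 => /eqP; rewrite eq_sym oner_eq0.
Qed.

Lemma upper_prob_xi_eq_upper b :
  V [set w | b <= xi w] = 1 -> (forall P, PP P -> P [set w | b < xi w] = 0) ->
  V [set w | xi w = b] = 1.
Proof.
move=> Vb1 Pb0; case: (upper_prob_xi01 (measurable_set1 b)) => //.
move=> /(upper_prob_eq0 PP_neq0 PP_fa (measurable_xi_eq b)) Pb0'.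
have : V [set w | b <= xi w] = 0.
  apply/(upper_prob_eq0 PP_neq0 PP_fa (measurable_xi_ge b)) => P PP_P.
  by rewrite fa_prob_xi_ge // Pb0 // Pb0' // addr0.
by rewrite Vb1 => /eqP; rewrite oner_eq0.
Qed.

End ZeroOneLaw.

Theorem corollary1 (d : measure_display) (T : measurableType d) (R : realType)
    (PP : set (set T -> R)) (F0 : set (set T)) (xi : T -> R) :
  PP !=set0 ->
  (forall P, PP P -> fa_probability P) ->
  continuous_setfun (upper_prob PP) ->
  continuous_setfun (lower_prob PP) ->
  sigma_algebra setT F0 -> F0 `<=` measurable ->
  (forall A, F0 A -> lower_prob PP A = 0 \/ lower_prob PP A = 1) ->
  (forall B : set R, measurable B -> F0 (xi @^-1` B)) ->
  [/\ lower_prob PP [set w | (choquet (lower_prob PP) xi <= (xi w)%:E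
                              <= choquet (upper_prob PP) xi)%E] = 1,
      upper_prob PP [set w | (xi w)%:E = choquet (lower_prob PP) xi] = 1 &
      upper_prob PP [set w | (xi w)%:E = choquet (upper_prob PP) xi] = 1].
Proof.
move=> PP_neq0 PP_fa V_cont v_cont _ F0_measurable v01 xi_F0.
have measurable_xi B : measurable B -> measurable (xi @^-1` B).
  by move=> /xi_F0/F0_measurable.
have v_xi01 B : measurable B -> _ := fun mB => v01 _ (xi_F0 B mB).
have [a [-> Pa1 va0]] := lower_choquet_xi PP_neq0 PP_fa measurable_xi v_xi01 v_cont.
have [b [-> Vb1 Pb0]] := upper_choquet_xi PP_neq0 PP_fa measurable_xi v_xi01 V_cont.
have EFin_eq c : [set w | (xi w)%:E = c%:E] = [set w | xi w = c].
  by apply/eq_set => w; apply/propext; split => [[]|->].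
rewrite !EFin_eq; under eq_set do rewrite !lee_fin.
split.
- exact: lower_prob_xi_itv.
- exact: upper_prob_xi_eq_lower.
- exact: upper_prob_xi_eq_upper.
Qed.
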